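(* Let $G$ be a finite group, $\omega$ a normalized 3-cocycle, $X,Y$ finite $G$-sets, and $(F,s^F),(H,s^H):\mathcal M(X,\Psi_X)\to\mathcal M(Y,\Psi_Y)$ $\mathrm{Vec}_G^\omega$-module functors with associated data $m^F,A^F$ and $m^H,A^H$. Then morphisms of module functors $\eta:(F,s^F)\Rightarrow(H,s^H)$ are in bijection (via $\eta\mapsto(M^\eta_{x,y})$ with $M^\eta_{x,y}=p_{Hxy}\circ\eta_x\circ j_{Fxy}$) with families of matrices $M_{x,y}\in\mathrm{Mat}(m^H_{xy}\times m^F_{xy},\mathbb F)$ ($x\in X,y\in Y$) satisfying $M_{x,y}A^F_{g,x,y}=A^H_{g,x,y}M_{g\cdot x,g\cdot y}$ for all $g\in G,x\in X,y\in Y$. Moreover, $\eta$ is an isomorphism if and only if every $M^\eta_{x,y}$ is square and invertible.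
   Context: $\mathbb F$ is algebraically closed. $\mathrm{Vec}_G^\omega$: finite-dimensional $G$-graded vector spaces, simple objects $\delta^g$, $\delta^g\otimes\delta^h=\delta^{gh}$, associator $\omega(g,h,k)\mathrm{id}$. For a $G$-set $X$ and normalized $\Psi:G\times G\times X\to\mathbb F^\times$ with $\Psi(h,k,g^{-1}\cdot x)\Psi^{-1}(gh,k,x)\Psi(g,hk,x)\Psi^{-1}(g,h,x)=\omega^{-1}(g,h,k)$, $\mathcal M(X,\Psi)$ is the category of finite-dimensional $X$-graded vector spaces (simple objects $x\in X$), $\delta^g\triangleright x=g\cdot x$, module constraint $m_{\delta^g,\delta^h,x}=\Psi(g,h,(gh)\cdot x)\mathrm{id}$. A module functor is an $\mathbb F$-linear functor $F$ with natural isomorphism $s_{C,M}:F(C\triangleright M)\to C\triangleright F(M)$ satisfying the module pentagon axiom; a morphism of module functors is a natural transformation $\eta$ with $s^H_{C,M}\circ\eta_{C\triangleright M}=(\mathrm{id}_C\triangleright\eta_M)\circ s^F_{C,M}$. For a module functor $F$: $m^F_{xy}=\dim\mathrm{Hom}(F(x),y)$; inclusions $j^\alpha_{Fxy}:y\to F(x)$ and projections $p^\alpha_{Fxy}:F(x)\to y$ with $p^\alpha\circ j^\beta=\delta\delta\,\mathrm{id}$, $\sum j\circ p=\mathrm{id}$ are chosen, $j_{Fxy}=(j^1_{Fxy},\dots)$: $y^{\oplus m^F_{xy}}\to F(x)$, $p_{Fxy}=(p^1_{Fxy},\dots)^T$; $A^F_{g,x,y}$ is the matrix with $(\alpha,\beta)$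 entry $(\mathrm{id}_{\delta^g}\triangleright p^\alpha_{Fxy})\circ s_{\delta^g,x}\circ j^\beta_{F,g\cdot x,g\cdot y}\in\mathbb F$. Morphisms $y^{\oplus a}\to y^{\oplus b}$ are identified with $b\times a$ matrices. *)

From HB Require Import structures.
From mathcomp Require Import all_boot all_order all_fingroup all_algebra.
Set Implicit Arguments. Unset Strict Implicit. Unset Printing Implicit Defensive.
Import GRing.Theory.
Local Open Scope ring_scope.

Record gset (G : finGroupType) := GSet {
  gcar :> finType;
  gsact : G -> gcar -> gcar;
  gact1 : forall x, gsact 1%g x = x;
  gactM : forall g h x, gsact (g * h)%g x = gsact g (gsact h x) }.
Arguments gsact {G} _ _ _.

Definition normalized_3cocycle (K : fieldType) (G : finGroupType)
    (omega : G -> G -> G -> K) : Prop :=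
  (forall g h k, omega g h k != 0) /\
  (forall h k, omega 1%g h k = 1) /\ (forall g k, omega g 1%g k = 1) /\
  (forall g h, omega g h 1%g = 1) /\
  (forall g h k l, omega h k l * omega g (h * k)%g l * omega g h k
                   = omega (g * h)%g k l * omega g h (k * l)%g).

Definition module_Psi (K : fieldType) (G : finGroupType)
    (omega : G -> G -> G -> K) (X : gset G) (Psi : G -> G -> X -> K) : Prop :=
  (forall g h x, Psi g h x != 0) /\
  (forall h x, Psi 1%g h x = 1) /\ (forall g x, Psi g 1%g x = 1) /\
  (forall g h k x, Psi h k (gsact X g^-1%g x) * (Psi (g * h)%g k x)^-1
                   * Psi g (h * k)%g x * (Psi g h x)^-1 = (omega g h k)^-1).

Section Cat.
Variable K : fieldType.
Variable G : finGroupType.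
Variable X : gset G.

(* The category M(X,Psi): objects are X-graded f.d. spaces, modelled by
   their graded dimensions V : X -> nat (component at z is K^(V z));
   a morphism V -> W is a family of matrices 'M_(W z, V z)
   (column-vector convention, as in the paper). *)
Definition obj := X -> nat.
Definition mhom (V W : obj) := forall z : X, 'M[K]_(W z, V z).
Definition idh (V : obj) : mhom V V := fun z => 1%:M.
Definition hcomp (U V W : obj) (f : mhom V W) (g : mhom U V) : mhom U W :=
  fun z => f z *m g z.
Definition heq (V W : obj) (f g : mhom V W) : Prop := forall z, f z = g z.
Definition hadd (V W : obj) (f g : mhom V W) : mhom V W := fun z => f z + g z.
Definition hscale (V W : obj) (c : K) (f : mhom V W) : mhom V W :=
  fun z => c *: f z.

Definition simple (x : X) : obj := fun z => nat_of_bool (z == x).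
(* End(x) = K : the scalar of an endomorphism of a simple object *)
Definition scal (x : X) (f : mhom (simple x) (simple x)) : K := \tr (f x).

Definition actobj (g : G) (V : obj) : obj := fun z => V (gsact X g^-1%g z).
Definition acthom (g : G) (V W : obj) (f : mhom V W) :
  mhom (actobj g V) (actobj g W) := fun z => f (gsact X g^-1%g z).

Definition eqhom (V W : obj) (E : forall z, V z = W z) : mhom V W :=
  fun z => castmx (erefl (W z), esym (E z)) (1%:M : 'M[K]_(W z)).

Lemma actobjM (g h : G) (V : obj) z :
  actobj (g * h)%g V z = actobj g (actobj h V) z.
Proof. by rewrite /actobj invMg gactM. Qed.

Definition mcon (Psi : G -> G -> X -> K) (g h : G) (V : obj) :
  mhom (actobj (g * h)%g V) (actobj g (actobj h V)) :=
  fun z => Psi g h z *: eqhom (actobjM g h V) z.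

Lemma actsimple (g : G) (x : X) z :
  actobj g (simple x) z = simple (gsact X g x) z.
Proof.
rewrite /actobj /simple; congr nat_of_bool.
apply/eqP/eqP => [<-|->].
  by rewrite -gactM mulgV gact1.
by rewrite -gactM mulVg gact1.
Qed.

Definition iso_act (g : G) (x : X) : mhom (simple (gsact X g x)) (actobj g (simple x)) :=
  eqhom (fun z => esym (actsimple g x z)).
Definition iso_act_inv (g : G) (x : X) : mhom (actobj g (simple x)) (simple (gsact X g x)) :=
  eqhom (actsimple g x).
End Cat.

Arguments idh {K G X} V.
Arguments hcomp {K G X U V W} f g.
Arguments heq {K G X V W} f g.
Arguments hadd {K G X V W} f g.
Arguments hscale {K G X V W} c f.
Arguments simple {G X} x.
Arguments scal {K G X x} f.
Arguments actobj {G X} g V.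
Arguments acthom {K G X} g {V W} f.
Arguments mcon {K G X} Psi g h V.
Arguments iso_act K {G X} g x.
Arguments iso_act_inv K {G X} g x.

Record lin_functor (K : fieldType) (G : finGroupType) (X Y : gset G) := LinFunctor {
  Fo : obj X -> obj Y;
  Fm : forall V W : obj X, mhom K V W -> mhom K (Fo V) (Fo W);
  Fm_id : forall V, heq (Fm (idh V)) (idh (Fo V));
  Fm_comp : forall U V W (f : mhom K V W) (g : mhom K U V),
      heq (Fm (hcomp f g)) (hcomp (Fm f) (Fm g));
  Fm_add : forall V W (f g : mhom K V W), heq (Fm (hadd f g)) (hadd (Fm f) (Fm g));
  Fm_scale : forall V W (c : K) (f : mhom K V W),
      heq (Fm (hscale c f)) (hscale c (Fm f)) }.
Arguments Fo {K G X Y} l V.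
Arguments Fm {K G X Y} l {V W} f.

(* Vec_G^omega-module functors (structure s given on the simple objects
   delta^g of Vec_G^omega, which determines it) *)
Record modfun (K : fieldType) (G : finGroupType) (X Y : gset G)
    (PsiX : G -> G -> X -> K) (PsiY : G -> G -> Y -> K) := ModFun {
  mfun :> lin_functor K X Y;
  ms : forall (g : G) (V : obj X),
      mhom K (Fo mfun (actobj g V)) (actobj g (Fo mfun V));
  ms_nat : forall g V W (f : mhom K V W),
      heq (hcomp (ms g W) (Fm mfun (acthom g f)))
          (hcomp (acthom g (Fm mfun f)) (ms g V));
  ms_iso : forall g V, exists t : mhom K (actobj g (Fo mfun V)) (Fo mfun (actobj g V)),
      heq (hcomp t (ms g V)) (idh _) /\ heq (hcomp (ms g V) t) (idh _);
  ms_pent : forall g h V,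
      heq (hcomp (acthom g (ms h V)) (hcomp (ms g (actobj h V)) (Fm mfun (mcon PsiX g h V))))
          (hcomp (mcon PsiY g h (Fo mfun V)) (ms (g * h)%g V)) }.
Arguments ms {K G X Y PsiX PsiY} m g V.

Section ModFun.
Variables (K : fieldType) (G : finGroupType) (X Y : gset G).
Variables (PsiX : G -> G -> X -> K) (PsiY : G -> G -> Y -> K).
Implicit Types F H : modfun PsiX PsiY.

Definition modnat F H (eta : forall V : obj X, mhom K (Fo F V) (Fo H V)) : Prop :=
  (forall V W (f : mhom K V W), heq (hcomp (eta W) (Fm F f)) (hcomp (Fm H f) (eta V))) /\
  (forall g V, heq (hcomp (ms H g V) (eta (actobj g V))) (hcomp (acthom g (eta V)) (ms F g V))).

Definition modiso F H (eta : forall V : obj X, mhom K (Fo F V) (Fo H V)) : Prop :=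
  exists theta : forall V : obj X, mhom K (Fo H V) (Fo F V),
    modnat theta /\
    forall V, heq (hcomp (theta V) (eta V)) (idh _) /\ heq (hcomp (eta V) (theta V)) (idh _).

(* m^F_{xy} = dim Hom(F(x), y) *)
Definition mlt F (x : X) (y : Y) : nat := Fo F (simple x) y.

Definition inclT F := forall x y, 'I_(mlt F x y) -> mhom K (simple y) (Fo F (simple x)).
Definition projT F := forall x y, 'I_(mlt F x y) -> mhom K (Fo F (simple x)) (simple y).

Definition incl_proj F (j : inclT F) (p : projT F) : Prop :=
  (forall x y (a b : 'I_(mlt F x y)),
      heq (hcomp (p x y a) (j x y b)) (hscale (a == b)%:R (idh (simple y)))) /\
  (forall x (z : Y), \sum_(y : Y) \sum_(a < mlt F x y) (hcomp (j x y a) (p x y a)) z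
                    = 1%:M).

Definition Amat F (j : inclT F) (p : projT F) (g : G) (x : X) (y : Y) :
    'M[K]_(mlt F x y, mlt F (gsact X g x) (gsact Y g y)) :=
  \matrix_(a, b)
    scal (hcomp (iso_act_inv K g y)
         (hcomp (acthom g (p x y a))
         (hcomp (ms F g (simple x))
         (hcomp (Fm F (iso_act K g x)) (j (gsact X g x) (gsact Y g y) b))))).

Definition Mmat F H (jF : inclT F) (pH : projT H)
    (eta : forall V : obj X, mhom K (Fo F V) (Fo H V)) (x : X) (y : Y) :
    'M[K]_(mlt H x y, mlt F x y) :=
  \matrix_(a, b) scal (hcomp (pH x y a) (hcomp (eta (simple x)) (jF x y b))).
End ModFun.

(* Every object of M(X,Psi) is a direct sum of simple objects x, with Hom(x,x') = 0
   for x <> x' and End(x) = K.  Hence a natural transformation between linear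
   functors is the same as an arbitrary family of maps eta_x : F(x) -> H(x) on
   simple objects, and the chosen inclusions and projections identify such
   families with matrix families M_{x,y}, composition going to matrix product.
   The module condition likewise need only be checked on simple objects, where,
   expanded through the j's and p's and their delta^g-translates, its entries are
   exactly those of M_{x,y} A^F_{g,x,y} and A^H_{g,x,y} M_{gx,gy}.  Inverse
   matrices intertwine the A's in the opposite direction, hence define the inverse
   module transformation. *)

From Pilot Require Import Defs.
From HB Require Import structures.
From mathcomp Require Import all_boot all_order all_fingroup all_algebra.
From Stdlib Require Import FunctionalExtensionality.
Import GRing.Theory.
Local Open Scope ring_scope.

Set Implicit Arguments. Unset Strict Implicit. Unset Printing Implicit Defensive.

Section HomCalculus.
Variables (K : fieldType) (G : finGroupType) (T : gset G).
Implicit Types U V W : obj T.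

Definition hzero V W : mhom K V W := fun z => 0.
Definition hsum V W (I : finType) (f : I -> mhom K V W) : mhom K V W :=
  fun z => \sum_(i : I) f i z.

Lemma hom_ext V W (f g : mhom K V W) : heq f g -> f = g.
Proof. exact: functional_extensionality_dep. Qed.

Lemma hcompA U V W Z (f : mhom K W Z) (g : mhom K V W) (h : mhom K U V) :
  hcomp f (hcomp g h) = hcomp (hcomp f g) h.
Proof. by apply: hom_ext => z; rewrite /hcomp mulmxA. Qed.

Lemma hcomp1h V W (f : mhom K V W) : hcomp (idh W) f = f.
Proof. by apply: hom_ext => z; rewrite /hcomp /idh mul1mx. Qed.

Lemma hcomph1 V W (f : mhom K V W) : hcomp f (idh V) = f.
Proof. by apply: hom_ext => z; rewrite /hcomp /idh mulmx1. Qed.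

Lemma hcomp0h U V W (f : mhom K U V) : hcomp (hzero V W) f = hzero _ _.
Proof. by apply: hom_ext => z; rewrite /hcomp /hzero mul0mx. Qed.

Lemma hcomph0 U V W (f : mhom K V W) : hcomp f (hzero U V) = hzero _ _.
Proof. by apply: hom_ext => z; rewrite /hcomp /hzero mulmx0. Qed.

Lemma hcomp_suml U V W (I : finType) (f : I -> mhom K V W) (h : mhom K U V) :
  hcomp (hsum f) h = hsum (fun i => hcomp (f i) h).
Proof. by apply: hom_ext => z; rewrite /hcomp /hsum mulmx_suml. Qed.

Lemma hcomp_sumr U V W (I : finType) (f : I -> mhom K U V) (h : mhom K V W) :
  hcomp h (hsum f) = hsum (fun i => hcomp h (f i)).
Proof. by apply: hom_ext => z; rewrite /hcomp /hsum mulmx_sumr. Qed.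

Lemma hcompZl U V W c (f : mhom K V W) (h : mhom K U V) :
  hcomp (hscale c f) h = hscale c (hcomp f h).
Proof. by apply: hom_ext => z; rewrite /hcomp /hscale scalemxAl. Qed.

Lemma hcompZr U V W c (f : mhom K V W) (h : mhom K U V) :
  hcomp f (hscale c h) = hscale c (hcomp f h).
Proof. by apply: hom_ext => z; rewrite /hcomp /hscale scalemxAr. Qed.

Lemma hscale0r V W (f : mhom K V W) : hscale 0 f = hzero _ _.
Proof. by apply: hom_ext => z; rewrite /hscale scale0r. Qed.

Lemma hscaler0 V W c : hscale c (hzero V W) = hzero _ _.
Proof. by apply: hom_ext => z; rewrite /hscale /hzero scaler0. Qed.

Lemma eq_hsum V W (I : finType) (f g : I -> mhom K V W) :
  (forall i, f i = g i) -> hsum f = hsum g.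
Proof. by move=> efg; apply: hom_ext => z; apply: eq_bigr => i _; rewrite efg. Qed.

Lemma hsum_eq0 V W (I : finType) (f : I -> mhom K V W) :
  (forall i, f i = hzero _ _) -> hsum f = hzero _ _.
Proof. by move=> f0; apply: hom_ext => z; apply: big1 => i _; rewrite f0. Qed.

Lemma hsum_single V W (I : finType) (i0 : I) (f : I -> mhom K V W) :
  (forall i, i != i0 -> f i = hzero _ _) -> hsum f = f i0.
Proof.
move=> f0; apply: hom_ext => z; rewrite /hsum (bigD1 i0) //= big1 ?addr0 // => i ni.
by rewrite f0.
Qed.

Lemma bool_mx_eq0 (b1 b2 : bool) (A : 'M[K]_(b1, b2)) : ~~ (b1 && b2) -> A = 0.
Proof. by case: b1 b2 A => [] [] A //= _; apply/matrixP => -[[]] // ? []. Qed.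

Lemma bool_mx_scalar (b : bool) (A : 'M[K]_b) : b -> A = \tr A *: 1%:M.
Proof. by case: b A => //= A _; rewrite {1}[A]mx11_scalar trace_mx11 scalemx1. Qed.

Lemma simple_hom_eq0 (x x' : T) (f : mhom K (simple x) (simple x')) :
  x != x' -> f = hzero _ _.
Proof.
move=> neq; apply: hom_ext => z; apply: bool_mx_eq0.
by apply: contra neq => /andP[/eqP <- /eqP <-].
Qed.

Lemma simple_endoE (x : T) (f : mhom K (simple x) (simple x)) :
  f = hscale (scal f) (idh _).
Proof.
apply: hom_ext => z; rewrite /hscale /idh /scal.
have [->|neq] := eqVneq z x; first by apply: bool_mx_scalar; rewrite /simple eqxx.
by rewrite (bool_mx_eq0 (f z)) ?(bool_mx_eq0 1%:M) ?scaler0 // /simple (negbTE neq).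
Qed.

Lemma hcomp_simple_endo V W (x : T) (f : mhom K (simple x) W)
    (u : mhom K (simple x) (simple x)) (h : mhom K V (simple x)) :
  hcomp f (hcomp u h) = hscale (scal u) (hcomp f h).
Proof. by rewrite {1}(simple_endoE u) hcompZl hcomp1h hcompZr. Qed.

Lemma scal1 (x : T) : scal (idh (simple x)) = 1 :> K.
Proof. by rewrite /scal /idh mxtrace1 /simple eqxx. Qed.

Lemma scalZ (x : T) c (f : mhom K (simple x) (simple x)) :
  scal (hscale c f) = c * scal f.
Proof. by rewrite /scal /hscale mxtraceZ. Qed.

Lemma scal0 (x : T) : scal (hzero (simple x) (simple x)) = 0 :> K.
Proof. by rewrite /scal /hzero mxtrace0. Qed.

Lemma scal_sum (x : T) (I : finType) (f : I -> mhom K (simple x) (simple x)) :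
  scal (hsum f) = \sum_i scal (f i).
Proof. by rewrite /scal /hsum raddf_sum. Qed.

Lemma scalM (x : T) (f g : mhom K (simple x) (simple x)) :
  scal (hcomp f g) = scal f * scal g.
Proof. by rewrite {1}(simple_endoE f) hcompZl hcomp1h scalZ. Qed.

Lemma eqhomK V W (E1 : forall z, V z = W z) (E2 : forall z, W z = V z) :
  hcomp (eqhom K E2) (eqhom K E1) = idh V.
Proof.
apply: hom_ext => z; rewrite /hcomp /eqhom /idh.
by case: (W z) / (E1 z) (E2 z) => e; rewrite (eq_irrelevance e erefl) !castmx_id mulmx1.
Qed.

Lemma iso_actK (g : G) (x : T) : hcomp (iso_act K g x) (iso_act_inv K g x) = idh _.
Proof. exact: eqhomK. Qed.

Lemma iso_actVK (g : G) (x : T) : hcomp (iso_act_inv K g x) (iso_act K g x) = idh _.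
Proof. exact: eqhomK. Qed.

Lemma gsact_inj (g : G) : injective (gsact T g).
Proof.
have gK z : gsact T g^-1 (gsact T g z) = z by rewrite -Defs.gactM mulVg Defs.gact1.
by move=> y y' e; rewrite -(gK y) e gK.
Qed.

Lemma acthomM (g : G) U V W (f : mhom K V W) (h : mhom K U V) :
  acthom g (hcomp f h) = hcomp (acthom g f) (acthom g h).
Proof. by []. Qed.

Lemma acthom1 (g : G) V : acthom g (idh V) = idh (actobj g V) :> mhom K _ _.
Proof. by []. Qed.

Lemma acthomZ (g : G) V W c (f : mhom K V W) :
  acthom g (hscale c f) = hscale c (acthom g f).
Proof. by []. Qed.

Lemma acthom_sum (g : G) V W (I : finType) (f : I -> mhom K V W) :
  acthom g (hsum f) = hsum (fun i => acthom g (f i)).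
Proof. by []. Qed.

Lemma scal_act (g : G) (y : T) (f : mhom K (simple y) (simple y)) :
  scal (hcomp (iso_act_inv K g y) (hcomp (acthom g f) (iso_act K g y))) = scal f.
Proof.
rewrite {1}(simple_endoE f) acthomZ acthom1 hcompZl hcompZr hcomp1h iso_actVK.
by rewrite scalZ scal1 mulr1.
Qed.

Definition obj_incl V (x : T) (k : 'I_(V x)) : mhom K (simple x) V :=
  fun z => \matrix_(i, l) ((i : nat) == k)%:R.
Definition obj_proj V (x : T) (k : 'I_(V x)) : mhom K V (simple x) :=
  fun z => \matrix_(l, i) ((i : nat) == k)%:R.

Lemma obj_decomp V :
  hsum (fun x => hsum (fun k : 'I_(V x) => hcomp (obj_incl k) (obj_proj k))) = idh V.
Proof.
apply: hom_ext => z; apply/matrixP => i j; rewrite /hsum /hcomp /idh.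
rewrite summxE (bigD1 z) //= [X in _ + X]big1 ?addr0 => [|x nx]; last first.
  rewrite summxE big1 // => k _; rewrite !mxE big1 // => -[l lt_l] _; exfalso.
  by move: lt_l; rewrite /simple eq_sym (negbTE nx).
rewrite summxE (bigD1 i) //= [X in _ + X]big1 ?addr0 => [|k nk]; last first.
  rewrite !mxE big1 // => l _; rewrite !mxE.
  by move: nk; rewrite eq_sym -val_eqE /= => /negbTE ->; rewrite mul0r.
rewrite !mxE; under eq_bigr => l _ do rewrite !mxE eqxx mul1r.
by rewrite sumr_const card_ord /simple eqxx eq_sym.
Qed.

End HomCalculus.

Arguments hzero {K G T V W}.
Arguments hsum {K G T V W I} f.
Arguments hsum_single {K G T V W I} i0 {f}.
Arguments obj_incl {K G T V x} k.
Arguments obj_proj {K G T V x} k.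

Section LinearFunctor.
Variables (K : fieldType) (G : finGroupType) (X Y : gset G).
Variable F : lin_functor K X Y.
Implicit Types U V W : obj X.

Lemma Fm1 V : Fm F (idh V) = idh _.
Proof. exact/hom_ext/Fm_id. Qed.

Lemma FmM U V W (f : mhom K V W) (g : mhom K U V) :
  Fm F (hcomp f g) = hcomp (Fm F f) (Fm F g).
Proof. exact/hom_ext/Fm_comp. Qed.

Lemma FmZ V W c (f : mhom K V W) : Fm F (hscale c f) = hscale c (Fm F f).
Proof. exact/hom_ext/Fm_scale. Qed.

Lemma FmD V W (f g : mhom K V W) : Fm F (hadd f g) = hadd (Fm F f) (Fm F g).
Proof. exact/hom_ext/Fm_add. Qed.

Lemma Fm0 V W : Fm F (@hzero K _ _ V W) = hzero.
Proof. by rewrite -(hscale0r (@hzero K _ _ V W)) FmZ hscale0r. Qed.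

Lemma Fm_sum V W (I : finType) (f : I -> mhom K V W) :
  Fm F (hsum f) = hsum (fun i => Fm F (f i)).
Proof.
rewrite /hsum; elim: (index_enum I) => [|i r IH].
  rewrite (_ : (fun z => _) = hzero) ?Fm0; last by apply: hom_ext => z; rewrite big_nil.
  by apply: hom_ext => z; rewrite big_nil.
rewrite (_ : (fun z => _) = hadd (f i) (fun z => \sum_(i <- r) f i z)).
  by rewrite FmD IH; apply: hom_ext => z; rewrite /hadd big_cons.
by apply: hom_ext => z; rewrite big_cons.
Qed.

Lemma Fm_decomp V W (f : mhom K V W) :
  Fm F f = hsum (fun x => hsum (fun k : 'I_(W x) =>
             hcomp (Fm F (obj_incl k)) (Fm F (hcomp (obj_proj k) f)))).
Proof.
rewrite -{1}(hcomp1h f) -(obj_decomp K W) hcomp_suml Fm_sum; apply: eq_hsum => x.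
by rewrite hcomp_suml Fm_sum; apply: eq_hsum => k; rewrite -hcompA FmM.
Qed.

End LinearFunctor.

Section Extension.
Variables (K : fieldType) (G : finGroupType) (X Y : gset G).
Variables F1 F2 : lin_functor K X Y.

Definition simple_family := forall x : X, mhom K (Fo F1 (simple x)) (Fo F2 (simple x)).

Definition natural (eta : forall V : obj X, mhom K (Fo F1 V) (Fo F2 V)) :=
  forall V W (f : mhom K V W), heq (hcomp (eta W) (Fm F1 f)) (hcomp (Fm F2 f) (eta V)).

Lemma natural_commute (eta : forall V : obj X, mhom K (Fo F1 V) (Fo F2 V)) :
  natural eta ->
  forall V W (f : mhom K V W), hcomp (eta W) (Fm F1 f) = hcomp (Fm F2 f) (eta V).
Proof. by move=> eta_nat V W f; apply/hom_ext/eta_nat. Qed.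

Lemma simple_family_commute (e : simple_family) (x x' : X)
    (phi : mhom K (simple x) (simple x')) :
  hcomp (Fm F2 phi) (e x) = hcomp (e x') (Fm F1 phi).
Proof.
case: (eqVneq x x') phi => [<-|neq] phi.
  by rewrite (simple_endoE phi) !FmZ !Fm1 hcompZl hcompZr hcomp1h hcomph1.
by rewrite (simple_hom_eq0 phi neq) !Fm0 hcomp0h hcomph0.
Qed.

Definition extend (e : simple_family) (V : obj X) : mhom K (Fo F1 V) (Fo F2 V) :=
  hsum (fun x => hsum (fun k : 'I_(V x) =>
     hcomp (Fm F2 (obj_incl k)) (hcomp (e x) (Fm F1 (obj_proj k))))).

Lemma extend_comp_simple (e : simple_family) V (x : X) (phi : mhom K (simple x) V) :
  hcomp (extend e V) (Fm F1 phi) = hcomp (Fm F2 phi) (e x).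
Proof.
rewrite (Fm_decomp F2 phi) /extend !hcomp_suml; apply: eq_hsum => x'.
rewrite !hcomp_suml; apply: eq_hsum => k.
by rewrite -!hcompA -FmM simple_family_commute.
Qed.

Lemma extend_simple (e : simple_family) (x : X) : extend e (simple x) = e x.
Proof. by have := extend_comp_simple e (idh (simple x)); rewrite !Fm1 hcomph1 hcomp1h. Qed.

Lemma extend_natural (e : simple_family) : natural (extend e).
Proof.
move=> V W f; apply: equal_f_dep.
rewrite -{1}(hcomph1 f) -(obj_decomp K V) hcomp_sumr Fm_sum hcomp_sumr.
rewrite [extend e V]/extend hcomp_sumr; apply: eq_hsum => x.
rewrite hcomp_sumr Fm_sum hcomp_sumr hcomp_sumr; apply: eq_hsum => k.
by rewrite [hcomp f _]hcompA FmM hcompA extend_comp_simple FmM !hcompA.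
Qed.

Lemma natural_extendE (eta : forall V : obj X, mhom K (Fo F1 V) (Fo F2 V)) :
  natural eta -> forall V, eta V = extend (fun x => eta (simple x)) V.
Proof.
move=> eta_nat V.
rewrite -(hcomph1 (eta V)) -(Fm1 F1) -(obj_decomp K V) Fm_sum hcomp_sumr /extend.
apply: eq_hsum => x; rewrite Fm_sum hcomp_sumr; apply: eq_hsum => k.
by rewrite FmM hcompA (natural_commute eta_nat) -hcompA.
Qed.

End Extension.

Lemma natural_id (K : fieldType) (G : finGroupType) (X Y : gset G) (F : lin_functor K X Y) :
  natural (fun V => idh (Fo F V)).
Proof. by move=> V W f z; rewrite /hcomp /idh mul1mx mulmx1. Qed.

Lemma natural_comp (K : fieldType) (G : finGroupType) (X Y : gset G)
    (F1 F2 F3 : lin_functor K X Y)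
    (theta : forall V : obj X, mhom K (Fo F2 V) (Fo F3 V))
    (eta : forall V : obj X, mhom K (Fo F1 V) (Fo F2 V)) :
  natural theta -> natural eta -> natural (fun V => hcomp (theta V) (eta V)).
Proof.
move=> theta_nat eta_nat V W f; apply: equal_f_dep.
rewrite -hcompA (natural_commute eta_nat) hcompA (natural_commute theta_nat).
by rewrite -hcompA.
Qed.

Section InclProj.
Variables (K : fieldType) (G : finGroupType) (X Y : gset G).
Variables (PsiX : G -> G -> X -> K) (PsiY : G -> G -> Y -> K).
Variable F : modfun PsiX PsiY.
Variables (j : inclT F) (p : projT F).
Arguments j : clear implicits.
Arguments p : clear implicits.
Hypothesis jp : incl_proj j p.

Lemma sum_incl_proj (x : X) :
  hsum (fun y => hsum (fun a : 'I_(mlt F x y) => hcomp (j x y a) (p x y a))) = idh _.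
Proof. by apply: hom_ext => z; case: jp => _; apply. Qed.

Lemma proj_incl (x : X) (y : Y) (a b : 'I_(mlt F x y)) :
  hcomp (p x y a) (j x y b) = hscale (a == b)%:R (idh _).
Proof. by apply: hom_ext; case: jp => + _; apply. Qed.

Lemma scal_hcomp_decomp (x : X) (y : Y) (u : mhom K (Fo F (simple x)) (simple y))
    (v : mhom K (simple y) (Fo F (simple x))) :
  scal (hcomp u v) = \sum_c scal (hcomp u (j x y c)) * scal (hcomp (p x y c) v).
Proof.
rewrite -{1}[u]hcomph1 -(sum_incl_proj x) hcomp_sumr hcomp_suml scal_sum (bigD1 y) //=.
rewrite [X in _ + X]big1 ?addr0 => [|y' ny].
  rewrite hcomp_sumr hcomp_suml scal_sum; apply: eq_bigr => c _.
  by rewrite !hcompA -hcompA scalM.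
rewrite hcomp_sumr hcomp_suml hsum_eq0 ?scal0 // => c.
by rewrite hcompA (simple_hom_eq0 (hcomp u (j x y' c)) ny) !hcomp0h.
Qed.

Lemma scal_act_hcomp_decomp (g : G) (x : X) (y : Y)
    (u : mhom K (actobj g (Fo F (simple x))) (simple (gsact Y g y)))
    (v : mhom K (simple (gsact Y g y)) (actobj g (Fo F (simple x)))) :
  scal (hcomp u v) =
  \sum_c scal (hcomp u (hcomp (acthom g (j x y c)) (iso_act K g y)))
        * scal (hcomp (hcomp (iso_act_inv K g y) (acthom g (p x y c))) v).
Proof.
rewrite -{1}[u]hcomph1 -(acthom1 K g) -(sum_incl_proj x) acthom_sum hcomp_sumr.
rewrite hcomp_suml scal_sum (bigD1 y) //= [X in _ + X]big1 ?addr0 => [|y' ny].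
  rewrite acthom_sum hcomp_sumr hcomp_suml scal_sum; apply: eq_bigr => c _.
  rewrite -scalM acthomM -{1}[acthom g (j x y c)]hcomph1 -(iso_actK K g y).
  by rewrite !hcompA.
rewrite acthom_sum hcomp_sumr hcomp_suml hsum_eq0 ?scal0 // => c.
rewrite acthomM -[acthom g (j x y' c)]hcomph1 -(iso_actK K g y') !hcompA.
rewrite (simple_hom_eq0 (hcomp (hcomp u (acthom g (j x y' c))) (iso_act K g y'))).
  by rewrite !hcomp0h.
by apply: contra ny => /eqP /gsact_inj ->.
Qed.

End InclProj.

Section MmatAlgebra.
Variables (K : fieldType) (G : finGroupType) (X Y : gset G).
Variables (PsiX : G -> G -> X -> K) (PsiY : G -> G -> Y -> K).

Lemma Mmat_id (F : modfun PsiX PsiY) (j : inclT F) (p : projT F) :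
  incl_proj j p -> forall x y, Mmat j p (fun V => idh (Fo F V)) x y = 1%:M.
Proof.
move=> jp x y; apply/matrixP => a b.
by rewrite !mxE hcomp1h (proj_incl jp) scalZ scal1 mulr1 -val_eqE.
Qed.

Lemma Mmat_comp (F1 F2 F3 : modfun PsiX PsiY)
    (j1 : inclT F1) (j2 : inclT F2) (p2 : projT F2) (p3 : projT F3) :
  incl_proj j2 p2 ->
  forall (theta : forall V : obj X, mhom K (Fo F2 V) (Fo F3 V))
         (eta : forall V : obj X, mhom K (Fo F1 V) (Fo F2 V)) x y,
  Mmat j1 p3 (fun V => hcomp (theta V) (eta V)) x y
  = Mmat j2 p3 theta x y *m Mmat j1 p2 eta x y.
Proof.
move=> jp2 theta eta x y; apply/matrixP => a b; rewrite !mxE.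
rewrite (_ : hcomp _ _ = hcomp (hcomp (p3 x y a) (theta (simple x)))
                               (hcomp (eta (simple x)) (j1 x y b))); last by rewrite !hcompA.
by rewrite (scal_hcomp_decomp jp2); apply: eq_bigr => c _; rewrite !mxE -hcompA.
Qed.

End MmatAlgebra.

Arguments Mmat_comp {K G X Y PsiX PsiY F1 F2 F3 j1 j2 p2 p3}.

Section ModuleCompatibility.
Variables (K : fieldType) (G : finGroupType) (X Y : gset G).
Variables (PsiX : G -> G -> X -> K) (PsiY : G -> G -> Y -> K).

Lemma ms_natural (F : modfun PsiX PsiY) (g : G) V W (f : mhom K V W) :
  hcomp (ms F g W) (Fm F (acthom g f)) = hcomp (acthom g (Fm F f)) (ms F g V).
Proof. exact/hom_ext/ms_nat. Qed.

Definition ms_simple (F : modfun PsiX PsiY) (g : G) (x : X) :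
    mhom K (Fo F (simple (gsact X g x))) (actobj g (Fo F (simple x))) :=
  hcomp (ms F g (simple x)) (Fm F (iso_act K g x)).

Variables F1 F2 : modfun PsiX PsiY.
Variable eta : forall V : obj X, mhom K (Fo F1 V) (Fo F2 V).

Definition ms_compatible (g : G) (V : obj X) :=
  hcomp (ms F2 g V) (eta (actobj g V)) = hcomp (acthom g (eta V)) (ms F1 g V).

Hypothesis eta_nat : natural eta.

Lemma ms_compatible_simpleE (g : G) (x : X) :
  ms_compatible g (simple x) <->
  hcomp (ms_simple F2 g x) (eta (simple (gsact X g x)))
  = hcomp (acthom g (eta (simple x))) (ms_simple F1 g x).
Proof.
rewrite /ms_compatible /ms_simple; split => compat.
  by rewrite -hcompA -(natural_commute eta_nat) hcompA compat -hcompA.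
have undo_iso (f : mhom K (Fo F1 (actobj g (simple x))) (actobj g (Fo F2 (simple x)))) :
    f = hcomp (hcomp f (Fm F1 (iso_act K g x))) (Fm F1 (iso_act_inv K g x)).
  by rewrite -hcompA -FmM iso_actK Fm1 hcomph1.
rewrite [RHS]undo_iso -(hcompA (acthom g (eta (simple x)))) -compat.
rewrite -!hcompA (natural_commute eta_nat) (hcompA (Fm F2 (iso_act K g x))).
by rewrite -FmM iso_actK Fm1 hcomp1h.
Qed.

Lemma ms_compatible_from_simple :
  (forall g x, ms_compatible g (simple x)) -> forall g V, ms_compatible g V.
Proof.
move=> compat g V; rewrite /ms_compatible.
rewrite -[LHS]hcomph1 -(Fm1 F1) -(acthom1 K g) -(obj_decomp K V).
rewrite -[in RHS](hcomp1h (ms F1 g V)) -(acthom1 K g) -(Fm1 F1) -(obj_decomp K V).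
rewrite !(acthom_sum, Fm_sum) hcomp_suml !hcomp_sumr; apply: eq_hsum => x.
rewrite !(acthom_sum, Fm_sum) hcomp_suml !hcomp_sumr; apply: eq_hsum => k.
rewrite acthomM FmM hcompA -(hcompA (ms F2 g V)) (natural_commute eta_nat) hcompA.
rewrite ms_natural -(hcompA (acthom g (Fm F2 (obj_incl k)))) compat.
rewrite -!hcompA ms_natural !hcompA -!acthomM.
by rewrite -(natural_commute eta_nat) FmM hcompA.
Qed.

End ModuleCompatibility.

Section Classification.
Variables (K : fieldType) (G : finGroupType) (X Y : gset G).
Variables (PsiX : G -> G -> X -> K) (PsiY : G -> G -> Y -> K).
Variables F1 F2 : modfun PsiX PsiY.
Variables (j1 : inclT F1) (p1 : projT F1) (j2 : inclT F2) (p2 : projT F2).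
Arguments j1 : clear implicits.
Arguments p1 : clear implicits.
Arguments j2 : clear implicits.
Arguments p2 : clear implicits.
Hypotheses (h1 : incl_proj j1 p1) (h2 : incl_proj j2 p2).

Definition family_mx (e : simple_family F1 F2) (x : X) (y : Y) :
    'M[K]_(mlt F2 x y, mlt F1 x y) :=
  \matrix_(a, b) scal (hcomp (p2 x y a) (hcomp (e x) (j1 x y b))).

Definition mx_family (M : forall x y, 'M[K]_(mlt F2 x y, mlt F1 x y)) :
    simple_family F1 F2 :=
  fun x => hsum (fun y => hsum (fun a => hsum (fun b =>
    hscale (M x y a b) (hcomp (j2 x y a) (p1 x y b))))).

Lemma family_mxK : cancel family_mx mx_family.
Proof.
move=> e; apply: functional_extensionality_dep => x.
rewrite -[e x]hcomp1h -[e x]hcomph1 -(sum_incl_proj h2 x) -(sum_incl_proj h1 x).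
rewrite hcomp_suml; apply: eq_hsum => y; rewrite hcomp_suml; apply: eq_hsum => a.
rewrite !hcomp_sumr (hsum_single y) => [|y' ny].
  rewrite !hcomp_sumr; apply: eq_hsum => b.
  by rewrite mxE -hcomp_simple_endo !hcompA.
rewrite !hcomp_sumr; apply: hsum_eq0 => b.
rewrite !hcompA -!(hcompA (j2 x y a)).
by rewrite (simple_hom_eq0 (hcomp (hcomp (p2 x y a) (e x)) (j1 x y' b)) ny) hcomp0h hcomph0.
Qed.

Lemma mx_familyK : cancel mx_family family_mx.
Proof.
move=> M; apply: functional_extensionality_dep => x.
apply: functional_extensionality_dep => y; apply/matrixP => a b.
have sandwich y' a' b' c : hcomp (p2 x y a)
    (hcomp (hscale c (hcomp (j2 x y' a') (p1 x y' b'))) (j1 x y b))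
  = hscale c (hcomp (hcomp (p2 x y a) (j2 x y' a')) (hcomp (p1 x y' b') (j1 x y b))).
  by rewrite hcompZl hcompZr !hcompA.
rewrite mxE hcomp_suml hcomp_sumr (hsum_single y) => [|y' ny]; last first.
  rewrite hcomp_suml hcomp_sumr; apply: hsum_eq0 => a'.
  rewrite hcomp_suml hcomp_sumr; apply: hsum_eq0 => b'.
  by rewrite sandwich (simple_hom_eq0 (hcomp (p2 x y a) (j2 x y' a')) ny) hcomp0h hscaler0.
rewrite hcomp_suml hcomp_sumr (hsum_single a) => [|a' na]; last first.
  rewrite hcomp_suml hcomp_sumr; apply: hsum_eq0 => b'.
  by rewrite sandwich !proj_incl // eq_sym (negbTE na) hscale0r hcomp0h hscaler0.
rewrite hcomp_suml hcomp_sumr (hsum_single b) => [|b' nb].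
  by rewrite sandwich !proj_incl // !eqxx hcompZl hcomp1h !scalZ scal1 !mulr1.
by rewrite sandwich !proj_incl // (negbTE nb) hscale0r hcomph0 hscaler0.
Qed.

Lemma natural_mx_familyE (eta : forall V : obj X, mhom K (Fo F1 V) (Fo F2 V)) :
  natural eta -> forall V, eta V = extend (mx_family (Mmat j1 p2 eta)) V.
Proof.
move=> eta_nat V; rewrite (natural_extendE eta_nat).
by rewrite -[in LHS](family_mxK (fun x => eta (simple x))).
Qed.

Lemma Mmat_extend_mx_family M x y : Mmat j1 p2 (extend (mx_family M)) x y = M x y.
Proof.
by apply/matrixP => a b; rewrite -[in RHS](mx_familyK M) !mxE extend_simple.
Qed.

Definition act_coef (g : G) (x : X)
    (T : mhom K (Fo F1 (simple (gsact X g x))) (actobj g (Fo F2 (simple x))))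
    (y : Y) (a : 'I_(mlt F2 x y)) (b : 'I_(mlt F1 (gsact X g x) (gsact Y g y))) : K :=
  scal (hcomp (hcomp (iso_act_inv K g y) (acthom g (p2 x y a)))
              (hcomp T (j1 (gsact X g x) (gsact Y g y) b))).

Lemma act_coef_left (eta : forall V : obj X, mhom K (Fo F1 V) (Fo F2 V)) g x y a b :
  act_coef (hcomp (ms_simple F2 g x) (eta (simple (gsact X g x)))) a b
  = (Amat j2 p2 g x y *m Mmat j1 p2 eta (gsact X g x) (gsact Y g y)) a b.
Proof.
rewrite /act_coef; set u := hcomp (iso_act_inv K g y) _; set v := j1 _ _ b.
rewrite (_ : hcomp u _ = hcomp (hcomp u (ms_simple F2 g x))
                               (hcomp (eta (simple (gsact X g x))) v)); last by rewrite !hcompA.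
rewrite (scal_hcomp_decomp h2) !mxE; apply: eq_bigr => c _.
by rewrite !mxE /u /ms_simple !hcompA.
Qed.

Lemma act_coef_right (eta : forall V : obj X, mhom K (Fo F1 V) (Fo F2 V)) g x y a b :
  act_coef (hcomp (acthom g (eta (simple x))) (ms_simple F1 g x)) a b
  = (Mmat j1 p2 eta x y *m Amat j1 p1 g x y) a b.
Proof.
rewrite /act_coef; set u := hcomp (iso_act_inv K g y) _; set v := j1 _ _ b.
rewrite (_ : hcomp u _ = hcomp (hcomp u (acthom g (eta (simple x))))
                               (hcomp (ms_simple F1 g x) v)); last by rewrite !hcompA.
rewrite (scal_act_hcomp_decomp h1) !mxE; apply: eq_bigr => c _; rewrite !mxE.
rewrite -(scal_act g (hcomp (p2 x y a) (hcomp (eta (simple x)) (j1 x y c)))).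
by congr (_ * _); rewrite /u /v /ms_simple ?acthomM !hcompA.
Qed.

Lemma act_hom_decomp g x
    (T : mhom K (Fo F1 (simple (gsact X g x))) (actobj g (Fo F2 (simple x)))) :
  T = hsum (fun y => hsum (fun a : 'I_(mlt F2 x y) => hsum (fun y' =>
        hsum (fun b : 'I_(mlt F1 (gsact X g x) y') =>
          hcomp (hcomp (acthom g (j2 x y a)) (iso_act K g y))
            (hcomp (hcomp (hcomp (iso_act_inv K g y) (acthom g (p2 x y a)))
                          (hcomp T (j1 (gsact X g x) y' b)))
                   (p1 (gsact X g x) y' b)))))).
Proof.
rewrite -{1}[T]hcomp1h -{1}[T]hcomph1 -(acthom1 K g).
rewrite -(sum_incl_proj h2 x) -(sum_incl_proj h1 (gsact X g x)).
rewrite acthom_sum hcomp_suml; apply: eq_hsum => y.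
rewrite acthom_sum hcomp_suml; apply: eq_hsum => a.
rewrite !hcomp_sumr; apply: eq_hsum => y'; rewrite !hcomp_sumr; apply: eq_hsum => b.
rewrite acthomM -{1}[acthom g (j2 x y a)]hcomph1 -(iso_actK K g y).
by rewrite !hcompA.
Qed.

Lemma act_coef_inj g x
    (T1 T2 : mhom K (Fo F1 (simple (gsact X g x))) (actobj g (Fo F2 (simple x)))) :
  (forall y a b, @act_coef g x T1 y a b = act_coef T2 a b) -> T1 = T2.
Proof.
move=> coefs; rewrite (act_hom_decomp T1) (act_hom_decomp T2).
apply: eq_hsum => y; apply: eq_hsum => a; apply: eq_hsum => y'; apply: eq_hsum => b.
congr (hcomp _ (hcomp _ _)).
have [eq_y'|neq] := eqVneq y' (gsact Y g y).
  subst y'; rewrite (simple_endoE (hcomp _ (hcomp T1 _))).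
  by rewrite (simple_endoE (hcomp _ (hcomp T2 _))) [scal _]coefs.
by rewrite (simple_hom_eq0 (hcomp _ (hcomp T1 _)) neq)
   (simple_hom_eq0 (hcomp _ (hcomp T2 _)) neq).
Qed.

Definition intertwines (M : forall x y, 'M[K]_(mlt F2 x y, mlt F1 x y)) :=
  forall g x y,
  M x y *m Amat j1 p1 g x y = Amat j2 p2 g x y *m M (gsact X g x) (gsact Y g y).

Lemma ms_compatible_simple_iff (eta : forall V : obj X, mhom K (Fo F1 V) (Fo F2 V)) :
  natural eta -> forall g x,
  ms_compatible eta g (simple x) <->
  forall y, Mmat j1 p2 eta x y *m Amat j1 p1 g x y
            = Amat j2 p2 g x y *m Mmat j1 p2 eta (gsact X g x) (gsact Y g y).
Proof.
move=> eta_nat g x; apply: (iff_trans (ms_compatible_simpleE eta_nat g x)).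
split => [compat y | intw].
  by apply/matrixP => a b; rewrite -act_coef_right -compat act_coef_left.
by apply: act_coef_inj => y a b; rewrite act_coef_left act_coef_right intw.
Qed.

Lemma modnat_intertwines (eta : forall V : obj X, mhom K (Fo F1 V) (Fo F2 V)) :
  modnat eta -> intertwines (Mmat j1 p2 eta).
Proof.
case=> eta_nat eta_ms g x.
exact/(ms_compatible_simple_iff eta_nat)/hom_ext/eta_ms.
Qed.

Lemma Mmat_inj (eta1 eta2 : forall V : obj X, mhom K (Fo F1 V) (Fo F2 V)) :
  natural eta1 -> natural eta2 ->
  (forall x y, Mmat j1 p2 eta1 x y = Mmat j1 p2 eta2 x y) -> forall V, eta1 V = eta2 V.
Proof.
move=> eta1_nat eta2_nat eqM V.
rewrite (natural_mx_familyE eta1_nat) (natural_mx_familyE eta2_nat).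
congr (extend (mx_family _) V); apply: functional_extensionality_dep => x.
exact: functional_extensionality_dep.
Qed.

Lemma intertwines_modnat M : intertwines M -> modnat (extend (mx_family M)).
Proof.
move=> intw; have ext_nat := extend_natural (mx_family M); split=> // g V z.
rewrite (ms_compatible_from_simple ext_nat) // => {}g x.
apply/(ms_compatible_simple_iff ext_nat) => y.
by rewrite !Mmat_extend_mx_family; apply: intw.
Qed.

End Classification.

Lemma castmx_unitmxP (K : fieldType) (m n : nat) (M : 'M[K]_(m, n)) :
  (exists E : n = m, castmx (erefl m, E) M \in unitmx) <->
  exists N : 'M[K]_(n, m), M *m N = 1%:M /\ N *m M = 1%:M.
Proof.
split=> [[E] | [N [MN NM]]].
  case: m / E M => M; rewrite castmx_id => unitM.
  by exists (invmx M); rewrite mulmxV ?mulVmx.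
have E : n = m by apply/eqP; rewrite eqn_leq (mulmx1_min NM) (mulmx1_min MN).
exists E; case: m / E M N MN NM => M N MN _.
by rewrite castmx_id; case: (mulmx1_unit MN).
Qed.

Lemma mulmx_intertwine_inv (R : pzSemiRingType) (m n m' n' : nat)
    (M : 'M[R]_(m, n)) (N : 'M[R]_(n, m)) (M' : 'M[R]_(m', n')) (N' : 'M[R]_(n', m'))
    (A : 'M[R]_(n, n')) (B : 'M[R]_(m, m')) :
  N *m M = 1%:M -> M' *m N' = 1%:M -> M *m A = B *m M' -> N *m B = A *m N'.
Proof.
move=> NM MN' MA; rewrite -[N *m B]mulmx1 -MN' mulmxA -(mulmxA N) -MA.
by rewrite mulmxA NM mul1mx.
Qed.

Section Isomorphism.
Variables (K : fieldType) (G : finGroupType) (X Y : gset G).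
Variables (PsiX : G -> G -> X -> K) (PsiY : G -> G -> Y -> K).

Lemma natural_Mmat1_id (F : modfun PsiX PsiY) (j : inclT F) (p : projT F) :
  incl_proj j p -> forall eps : forall V : obj X, mhom K (Fo F V) (Fo F V),
  natural eps -> (forall x y, Mmat j p eps x y = 1%:M) -> forall V, eps V = idh _.
Proof.
move=> jp eps eps_nat M1; apply: (Mmat_inj jp jp eps_nat (natural_id F)) => x y.
by rewrite M1 Mmat_id.
Qed.

Variables F H : modfun PsiX PsiY.
Variables (jF : inclT F) (pF : projT F) (jH : inclT H) (pH : projT H).
Hypotheses (hF : incl_proj jF pF) (hH : incl_proj jH pH).
Variable eta : forall V : obj X, mhom K (Fo F V) (Fo H V).
Hypothesis eta_mod : modnat eta.

Lemma modiso_Mmat_inverse :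
  modiso eta -> forall x y, exists N : 'M[K]_(mlt F x y, mlt H x y),
  Mmat jF pH eta x y *m N = 1%:M /\ N *m Mmat jF pH eta x y = 1%:M.
Proof.
case=> theta [_ inv] x y; exists (Mmat jH pF theta x y).
have eta_theta : (fun V => hcomp (eta V) (theta V)) = (fun V => idh _).
  by apply: functional_extensionality_dep => V; apply/hom_ext/(inv V).2.
have theta_eta : (fun V => hcomp (theta V) (eta V)) = (fun V => idh _).
  by apply: functional_extensionality_dep => V; apply/hom_ext/(inv V).1.
by rewrite -!Mmat_comp // eta_theta theta_eta !Mmat_id.
Qed.

Lemma Mmat_inverse_modiso :
  (forall x y, exists N : 'M[K]_(mlt F x y, mlt H x y),
     Mmat jF pH eta x y *m N = 1%:M /\ N *m Mmat jF pH eta x y = 1%:M) ->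
  modiso eta.
Proof.
move=> invM.
have [N' MN'] := fin_all_exists (fun xy : X * Y => invM xy.1 xy.2).
pose N x y : 'M[K]_(mlt F x y, mlt H x y) := N' (x, y).
have MN x y : Mmat jF pH eta x y *m N x y = 1%:M /\ N x y *m Mmat jF pH eta x y = 1%:M.
  exact: MN' (x, y).
have N_intw : intertwines jH pH jF pF N.
  move=> g x y; apply: mulmx_intertwine_inv (MN x y).2 (MN _ _).1 _.
  exact: modnat_intertwines.
have theta_mod := intertwines_modnat hH hF N_intw.
have Mtheta := Mmat_extend_mx_family hH hF N.
exists (extend (mx_family pH jF N)); split=> // V; split; apply/equal_f_dep.
- apply: (natural_Mmat1_id hF (natural_comp theta_mod.1 eta_mod.1)) => x y.
  by rewrite (Mmat_comp hH) Mtheta (MN x y).2.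
- apply: (natural_Mmat1_id hH (natural_comp eta_mod.1 theta_mod.1)) => x y.
  by rewrite (Mmat_comp hF) Mtheta (MN x y).1.
Qed.

End Isomorphism.

Theorem lemma5p8 (K : closedFieldType) (G : finGroupType)
  (omega : G -> G -> G -> K) (X Y : gset G)
  (PsiX : G -> G -> X -> K) (PsiY : G -> G -> Y -> K) :
  normalized_3cocycle omega ->
  module_Psi omega PsiX -> module_Psi omega PsiY ->
  forall (F H : modfun PsiX PsiY)
         (jF : inclT F) (pF : projT F) (jH : inclT H) (pH : projT H),
  incl_proj jF pF -> incl_proj jH pH ->
  (* eta |-> M^eta lands in the families satisfying the compatibility *)
  (forall eta : forall V : obj X, mhom K (Fo F V) (Fo H V),
     modnat eta ->
     forall (g : G) (x : X) (y : Y),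
       Mmat jF pH eta x y *m Amat jF pF g x y
       = Amat jH pH g x y *m Mmat jF pH eta (gsact X g x) (gsact Y g y)) /\
  (* injectivity *)
  (forall eta1 eta2 : forall V : obj X, mhom K (Fo F V) (Fo H V),
     modnat eta1 -> modnat eta2 ->
     (forall x y, Mmat jF pH eta1 x y = Mmat jF pH eta2 x y) ->
     forall V, heq (eta1 V) (eta2 V)) /\
  (* surjectivity *)
  (forall M : forall (x : X) (y : Y), 'M[K]_(mlt H x y, mlt F x y),
     (forall (g : G) (x : X) (y : Y),
        M x y *m Amat jF pF g x y = Amat jH pH g x y *m M (gsact X g x) (gsact Y g y)) ->
     exists eta : forall V : obj X, mhom K (Fo F V) (Fo H V),
       modnat eta /\ forall x y, Mmat jF pH eta x y = M x y) /\
  (* isomorphisms *)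
  (forall eta : forall V : obj X, mhom K (Fo F V) (Fo H V),
     modnat eta ->
     (modiso eta <->
      forall x y, exists E : mlt F x y = mlt H x y,
        castmx (erefl (mlt H x y), E) (Mmat jF pH eta x y) \in unitmx)).
Proof.
move=> _ _ _ F H jF pF jH pH hF hH.
split; first exact: modnat_intertwines.
split.
  move=> eta1 eta2 [eta1_nat _] [eta2_nat _] eqM V z.
  by rewrite (Mmat_inj hF hH eta1_nat eta2_nat eqM).
split.
  move=> M intw; exists (extend (mx_family pF jH M)).
  split; [exact (intertwines_modnat hF hH intw) | exact: Mmat_extend_mx_family].
move=> eta eta_mod; split => [iso x y | unitM].
  by apply/castmx_unitmxP; exact (modiso_Mmat_inverse hF hH iso x y).
by apply (Mmat_inverse_modiso hF hH eta_mod) => x y; apply/castmx_unitmxP.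
Qed.
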